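(* Let $k$ be a commutative ring, let $\mathcal C$ be a full monoidal subcategory of the category $k\text{-}\mathrm{Mod}$ of $k$-modules, and let $\mathcal A$ be a $\mathcal C$-category. Let $\omega,\omega':\mathcal A\to\mathcal C$ be $\mathcal C$-functors. Then every natural transformation $\varphi:\omega\to\omega'$ is a $\mathcal C$-morphism.
   Context: A $\mathcal C$-category is a category $\mathcal A$ with a bifunctor $\otimes:\mathcal C\times\mathcal A\to\mathcal A$ and coherent natural isomorphisms $(X\otimes Y)\otimes P\cong X\otimes(Y\otimes P)$, $\pi:k\otimes P\cong P$. A $\mathcal C$-functor $\omega:\mathcal A\to\mathcal C$ (where $\mathcal C$ acts on itself by tensor product) is a functor with a coherent natural isomorphism $\xi:\omega(X\otimes P)\to X\otimes\omega(P)$ (coherence includes compatibility of $\xi$ with the unit isomorphisms). A natural transformation $\varphi:\omega\to\omega'$ is a $\mathcal C$-morphism if $\xi'\circ\varphi(X\otimes P)=(1_X\otimes\varphi(P))\circ\xi$ for all $X\in\mathcal C$, $P\in\mathcal A$. *)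

From HB Require Import structures.
From mathcomp Require Import all_boot all_algebra.
From Stdlib Require Import ClassicalEpsilon.
Set Implicit Arguments. Unset Strict Implicit. Unset Printing Implicit Defensive.
Import GRing.Theory.
Local Open Scope ring_scope.

Record category := Category {
  obj :> Type;
  hom : obj -> obj -> Type;
  idm : forall P, hom P P;
  comp : forall P Q R, hom Q R -> hom P Q -> hom P R;
  comp_idl : forall P Q (h : hom P Q), comp (idm Q) h = h;
  comp_idr : forall P Q (h : hom P Q), comp h (idm P) = h;
  comp_assoc : forall P Q R S (f : hom R S) (g : hom Q R) (h : hom P Q),
      comp f (comp g h) = comp (comp f g) h }.
Arguments idm {_} _.
Arguments comp {_ _ _ _} _ _.

Definition iso (A : category) (P Q : A) (f : hom P Q) : Prop :=
  exists g : hom Q P, comp g f = idm P /\ comp f g = idm Q.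

Definition bilinear_map (k : comPzRingType) (U V W : lmodType k)
  (b : U -> V -> W) : Prop :=
  (forall v, linear (fun u => b u v)) /\ (forall u, linear (b u)).

(** Objects: a type [ob] with, for each object, its underlying k-module [car X];
    morphisms X -> Y are ALL k-linear maps [car X -> car Y] (fullness).
    The unit object is (isomorphic to) k, via the linear bijection [uc].
    The tensor object [tens X Y] is the tensor product of k-modules
    [car X (x)_k car Y], given by its universal bilinear map [tm]. *)
Record fullMonSub (k : comPzRingType) := FullMonSub {
  ob :> Type;
  car : ob -> lmodType k;
  unito : ob;
  uc : car unito -> k^o;
  uc_lin : linear uc;
  uc_bij : bijective uc;
  tens : ob -> ob -> ob;
  tm : forall X Y, car X -> car Y -> car (tens X Y);
  tm_bilin : forall X Y, bilinear_map (@tm X Y);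
  tm_univ : forall X Y (W : lmodType k) (b : car X -> car Y -> W),
      bilinear_map b ->
      exists! h : car (tens X Y) -> W, linear h /\ forall x y, h (tm x y) = b x y }.
Arguments tm {_ _ _ _}.

Section MonoidalStructure.
Variables (k : comPzRingType) (C : fullMonSub k).

(** The linear map X (x) Y -> W induced by a bilinear map (well defined by
    [tm_univ] whenever [b] is bilinear). *)
Definition ext_bil (X Y : C) (W : lmodType k) (b : car X -> car Y -> W) :
    car (tens X Y) -> W :=
  epsilon (inhabits (fun _ => 0))
    (fun h => linear h /\ forall x y, h (tm x y) = b x y).

Definition tensHom (X X' Y Y' : C) (f : car X -> car X') (g : car Y -> car Y') :
    car (tens X Y) -> car (tens X' Y') :=
  ext_bil (fun x y => tm (f x) (g y)).

(** Associativity constraint of k-Mod: (x (x) y) (x) z |-> x (x) (y (x) z). *)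
Definition assocC (X Y Z : C) :
    car (tens (tens X Y) Z) -> car (tens X (tens Y Z)) :=
  ext_bil (fun (xy : car (tens X Y)) (z : car Z) =>
             ext_bil (fun (x : car X) (y : car Y) => tm x (tm y z)) xy).

Definition lunitC (X : C) : car (tens (unito C) X) -> car X :=
  ext_bil (fun u x => uc u *: x).
Definition runitC (X : C) : car (tens X (unito C)) -> car X :=
  ext_bil (fun x u => uc u *: x).
End MonoidalStructure.
Arguments ext_bil {k C X Y W}.
Arguments tensHom {k C X X' Y Y'}.
Arguments assocC {k C} X Y Z.
Arguments lunitC {k C} X.
Arguments runitC {k C} X.

Unset Implicit Arguments.
(** * C-categories (left module categories over C). *)
Record Ccat (k : comPzRingType) (C : fullMonSub k) := CCat {
  cA :> category;
  act : C -> cA -> cA;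
  actm : forall (X X' : C) (P P' : cA),
      (car X -> car X') -> hom P P' -> hom (act X P) (act X' P');
  actm_id : forall X P, actm _ _ _ _ (@id (car X)) (idm P) = idm (act X P);
  actm_comp : forall (X X' X'' : C) (P P' P'' : cA)
      (f : car X' -> car X'') (f' : car X -> car X')
      (h : hom P' P'') (h' : hom P P'),
      linear f -> linear f' ->
      actm _ _ _ _ (f \o f') (comp h h') = comp (actm _ _ _ _ f h) (actm _ _ _ _ f' h');
  mA : forall X Y P, hom (act (tens X Y) P) (act X (act Y P));
  mA_iso : forall X Y P, iso (mA X Y P);
  mA_nat : forall (X X' Y Y' : C) (P P' : cA)
      (f : car X -> car X') (g : car Y -> car Y') (h : hom P P'),
      linear f -> linear g ->
      comp (mA X' Y' P') (actm _ _ _ _ (tensHom f g) h) = comp (actm _ _ _ _ f (actm _ _ _ _ g h)) (mA X Y P);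
  piA : forall P, hom (act (unito C) P) P;
  piA_iso : forall P, iso (piA P);
  piA_nat : forall P P' (h : hom P P'),
      comp (piA P') (actm _ _ _ _ (@id (car (unito C))) h) = comp h (piA P);
  mA_pentagon : forall (X Y Z : C) (P : cA),
      comp (mA X Y (act Z P)) (mA (tens X Y) Z P) =
      comp (actm _ _ _ _ (@id (car X)) (mA Y Z P))
           (comp (mA X (tens Y Z) P) (actm _ _ _ _ (assocC X Y Z) (idm P)));
  mA_triangle : forall (X : C) (P : cA),
      comp (actm _ _ _ _ (@id (car X)) (piA P)) (mA X (unito C) P) =
      actm _ _ _ _ (runitC X) (idm P) }.
Arguments Ccat {k}.
Arguments act {_ _ _}.
Arguments actm {_ _ _ _ _ _ _}.
Arguments mA {_ _ _}.
Arguments piA {_ _ _}.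

(** * C-functors A -> C (C acting on itself by the tensor product). *)
Record Cfunctor (k : comPzRingType) (C : fullMonSub k) (A : Ccat C) := CFunctor {
  fo :> A -> C;
  fm : forall P Q : A, hom P Q -> car (fo P) -> car (fo Q);
  fm_lin : forall P Q (h : hom P Q), linear (fm _ _ h);
  fm_id : forall P, fm _ _ (idm P) =1 id;
  fm_comp : forall P Q R (h : hom Q R) (h' : hom P Q),
      fm _ _ (comp h h') =1 fm _ _ h \o fm _ _ h';
  xi : forall X P, car (fo (act X P)) -> car (tens X (fo P));
  xi_lin : forall X P, linear (xi X P);
  xi_bij : forall X P, bijective (xi X P);
  xi_nat : forall (X X' : C) (P P' : A) (f : car X -> car X') (h : hom P P'),
      linear f ->
      xi X' P' \o fm _ _ (actm f h) =1 tensHom f (fm _ _ h) \o xi X P;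
  xi_assoc : forall (X Y : C) (P : A),
      tensHom (@id (car X)) (xi Y P) \o xi X (act Y P) \o fm _ _ (mA X Y P) =1
      assocC X Y (fo P) \o xi (tens X Y) P;
  xi_unit : forall P : A,
      lunitC (fo P) \o xi (unito C) P =1 fm _ _ (piA P) }.
Arguments Cfunctor {k C}.
Arguments fm {_ _ _ _ _ _}.
Arguments xi {_ _ _}.
Set Implicit Arguments.

Definition is_nat_trans (k : comPzRingType) (C : fullMonSub k) (A : Ccat C)
    (w w' : Cfunctor A) (phi : forall P : A, car (w P) -> car (w' P)) : Prop :=
  (forall P, linear (phi P)) /\
  (forall (P Q : A) (h : hom P Q), phi Q \o fm h =1 fm h \o phi P).

Definition is_Cmorphism (k : comPzRingType) (C : fullMonSub k) (A : Ccat C)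
    (w w' : Cfunctor A) (phi : forall P : A, car (w P) -> car (w' P)) : Prop :=
  forall (X : C) (P : A),
    xi w' X P \o phi (act X P) =1 tensHom (@id (car X)) (phi P) \o xi w X P.

(** For [x : X] let [pointC x : k -> X] be the morphism [a |-> a x].  Naturality
    of [xi] along [pointC x (x) P] together with the unit coherence gives
    [xi_X (omega (pointC x (x) P) z) = x (x) omega(pi) z] for every C-functor.
    As [omega(pi)] is onto, every pure tensor [x (x) u] of [X (x) omega P] arises
    this way, and on such elements the C-morphism identity for [phi] follows from
    naturality of [phi] along [pointC x (x) P] and along [pi].  Both sides being
    linear and [xi] bijective, pure tensors suffice. *)

From mathcomp Require Import all_boot all_algebra.
(* Imported after all_algebra so that [hom] denotes the category hom-type. *)
From Stdlib Require Import ClassicalEpsilon.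
Import GRing.Theory.
Local Open Scope ring_scope.

Section LinearMaps.
Context {k : comPzRingType}.
Implicit Types U V W : lmodType k.

Lemma linear_comp {U V W} (f : V -> W) (g : U -> V) :
  linear f -> linear g -> linear (f \o g).
Proof. by move=> hf hg a u v /=; rewrite hg hf. Qed.

Lemma linear_can2 {U V} (f : U -> V) (g : V -> U) :
  linear f -> cancel f g -> cancel g f -> linear g.
Proof. by move=> hf fK gK a u v; apply: (canLR fK); rewrite hf !gK. Qed.

End LinearMaps.

Section TensorProducts.
Context {k : comPzRingType} {C : fullMonSub k}.

Lemma tmZl (X Y : C) a (x : car X) (y : car Y) : tm (a *: x) y = a *: tm x y.
Proof. by have [hl _] := tm_bilin X Y; rewrite (scalable_linear (hl y)). Qed.

Lemma tmZr (X Y : C) a (x : car X) (y : car Y) : tm x (a *: y) = a *: tm x y.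
Proof. by have [_ hr] := tm_bilin X Y; rewrite (scalable_linear (hr x)). Qed.

Lemma ext_bilP (X Y : C) (W : lmodType k) (b : car X -> car Y -> W) :
  bilinear_map b -> linear (ext_bil b) /\ forall x y, ext_bil b (tm x y) = b x y.
Proof.
move=> hb; have [h [spec_h _]] := tm_univ hb.
exact: (epsilon_spec _ (fun g => linear g /\ forall x y, g (tm x y) = b x y)
                     (ex_intro _ h spec_h)).
Qed.

Lemma eq_on_tm (X Y : C) (W : lmodType k) (g1 g2 : car (tens X Y) -> W) :
  linear g1 -> linear g2 -> (forall x y, g1 (tm x y) = g2 (tm x y)) -> g1 =1 g2.
Proof.
move=> lin1 lin2 e12.
have hb : bilinear_map (fun x y => g1 (tm x y)).
  have [bl br] := tm_bilin X Y.
  by split=> v a u1 u2 /=; rewrite ?bl ?br lin1.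
have [h [_ uniq_h]] := tm_univ hb.
have <- := uniq_h g1 (conj lin1 (fun _ _ => erefl)).
by have <- := uniq_h g2 (conj lin2 (fun x y => esym (e12 x y))).
Qed.

Lemma tensHomP {X X' Y Y' : C} {f : car X -> car X'} {g : car Y -> car Y'} :
  linear f -> linear g ->
  linear (tensHom f g) /\ forall x y, tensHom f g (tm x y) = tm (f x) (g y).
Proof.
move=> hf hg; apply: ext_bilP.
have [bl br] := tm_bilin X' Y'.
by split=> v a u1 u2 /=; rewrite ?hf ?hg ?bl ?br.
Qed.

Lemma lunitCP (X : C) :
  linear (lunitC X) /\ forall a x, lunitC X (tm a x) = uc a *: x.
Proof.
apply: ext_bilP; split=> v a u1 u2 /=.
  by rewrite (@uc_lin _ C) scalerDl scalerA.
by rewrite scalerDr !scalerA mulrC.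
Qed.

Definition pointC {X : C} (x : car X) (a : car (unito C)) : car X := uc a *: x.

Lemma pointC_linear {X : C} (x : car X) : linear (pointC x).
Proof. by move=> a u v; rewrite /pointC (@uc_lin _ C) scalerDl scalerA. Qed.

Lemma tensHom_pointC (X Y Y' : C) (x : car X) (g : car Y -> car Y') :
  linear g -> tensHom (pointC x) g =1 tm x \o g \o lunitC Y.
Proof.
move=> hg; have [lin_tg tgE] := tensHomP (pointC_linear x) hg.
have [lin_l lE] := lunitCP Y.
apply: eq_on_tm => // [|a y].
  by have [_ br] := tm_bilin X Y'; do 2![apply: linear_comp => //].
by rewrite tgE /= lE (scalable_linear hg) tmZl tmZr.
Qed.

End TensorProducts.

Section CFunctors.
Context {k : comPzRingType} {C : fullMonSub k} {A : Ccat C}.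
Variable w : Cfunctor A.

Lemma fm_iso_surj {P Q : A} {f : hom P Q} :
  iso f -> forall u, exists z, fm (c:=w) f z = u.
Proof.
move=> [g [_ fg]] u; exists (fm g u).
by have /= <- := @fm_comp _ _ _ w _ _ _ f g u; rewrite fg (@fm_id _ _ _ w).
Qed.

Lemma xi_pointC {X : C} {P : A} (x : car X) (z : car (w (act (unito C) P))) :
  xi w X P (fm (c:=w) (actm (pointC x) (idm P)) z) = tm x (fm (c:=w) (piA P) z).
Proof.
have /= -> := @xi_nat _ _ _ w _ _ _ _ _ (idm P) (pointC_linear x) z.
rewrite tensHom_pointC /=; last exact: fm_lin.
by rewrite (@fm_id _ _ _ w) -(@xi_unit _ _ _ w P z).
Qed.

End CFunctors.

Theorem theorem6p4 (k : comPzRingType) (C : fullMonSub k) (A : Ccat C)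
    (w w' : Cfunctor A) (phi : forall P : A, car (w P) -> car (w' P)) :
  is_nat_trans phi -> is_Cmorphism phi.
Proof.
move=> [phi_lin phi_nat] X P.
have [xi_inv xiK xi_invK] := @xi_bij _ _ _ w X P.
suff onImage : xi w' X P \o phi (act X P) \o xi_inv =1 tensHom id (phi P).
  by move=> t; rewrite /= -onImage /= xiK.
have id_lin : linear (@id (car X)) by [].
have [tens_lin tensE] := tensHomP id_lin (phi_lin P).
apply: eq_on_tm => // [|x u].
  apply: linear_comp; first exact: linear_comp (xi_lin _ _ _ _ _ _) (phi_lin _).
  exact: linear_can2 (xi_lin _ _ _ _ _ _) xiK xi_invK.
have [z <-] := fm_iso_surj w (piA_iso _ _ _ P) u.
rewrite tensE -(xi_pointC w x z) /= xiK.
have /= -> := phi_nat _ _ (actm (pointC x) (idm P)) z.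
by rewrite xi_pointC; have /= -> := phi_nat _ _ (piA P) z.
Qed.
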